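(* Let $\mathbb{F}\in\{\mathbb{R},\mathbb{C}\}$ and let $\mathcal{P}(M,N)$ be the set of Parseval frames for $\mathbb{F}^N$ consisting of $M$ vectors. If $\Phi=\{\varphi_i\}_{i=1}^M\in\mathcal{P}(M,N)$ is an equiangular Parseval frame and $\Psi=\{\psi_i\}_{i=1}^M\in\mathcal{P}(M,N)$, then $TC(\Psi)\leq TC(\Phi)$. Consequently, when an equiangular Parseval frame exists in $\mathcal{P}(M,N)$, the maximizers of $TC$ over $\mathcal{P}(M,N)$ (equivalently, the maximizers of $\sum_{i,j}|\langle\varphi_i,\varphi_j\rangle|$ over $\mathcal{P}(M,N)$) are precisely the equiangular Parseval frames in $\mathcal{P}(M,N)$.
   Context: A Parseval frame for $\mathbb{F}^N$ is a family $\Phi=\{\varphi_i\}_{i=1}^M\subseteq\mathbb{F}^N$ whose $N\times M$ matrix (columns $\varphi_i$) satisfies $\Phi\Phi^*=I$. A Parseval frame is equiangular if $\|\varphi_i\|=\|\varphi_j\|$ for all $i,j$ and there is a constant $c$ with $|\langle\varphi_i,\varphi_j\rangle|=c$ for all $i\neq j$. The total coherence is $TC(\Phi)=\sum_{i\neq j}|\langle\varphi_i,\varphi_j\rangle|$. *)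

(* F in {R, C} is modelled with R : rcfType (a real closed
   field, e.g. the reals) and C := R[i] (complex numbers over R).
   Real frames are complex matrices all of whose entries are real. *)
From HB Require Import structures.
From mathcomp Require Import all_boot all_order all_algebra.
From mathcomp Require Import complex.
Set Implicit Arguments. Unset Strict Implicit. Unset Printing Implicit Defensive.
Import Order.TTheory GRing.Theory Num.Theory.
Local Open Scope ring_scope.

Inductive scalar_field := RealField | ComplexField.

Section Frames.
Variable R : rcfType.
Local Notation C := R[i].
Variables (N M : nat).

Definition over_field (K : scalar_field) (Phi : 'M[C]_(N, M)) : Prop :=
  match K with
  | RealField => forall k i, Phi k i \is Num.real
  | ComplexField => True
  end.

Definition adjmx (Phi : 'M[C]_(N, M)) : 'M[C]_(M, N) := (map_mx Num.conj Phi)^T.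

Definition parseval (K : scalar_field) (Phi : 'M[C]_(N, M)) : Prop :=
  over_field K Phi /\ Phi *m adjmx Phi = 1%:M.

Definition ip (Phi : 'M[C]_(N, M)) (i j : 'I_M) : C :=
  \sum_(k < N) Phi k i * Num.conj (Phi k j).

Definition vnorm (Phi : 'M[C]_(N, M)) (i : 'I_M) : C :=
  sqrtC (\sum_(k < N) `|Phi k i| ^+ 2).

Definition equiangular (Phi : 'M[C]_(N, M)) : Prop :=
  (forall i j, vnorm Phi i = vnorm Phi j) /\
  exists c : C, forall i j, i != j -> `|ip Phi i j| = c.

Definition TC (Phi : 'M[C]_(N, M)) : C :=
  \sum_(i < M) \sum_(j < M | j != i) `|ip Phi i j|.

Definition TCfull (Phi : 'M[C]_(N, M)) : C :=
  \sum_(i < M) \sum_(j < M) `|ip Phi i j|.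

End Frames.

From HB Require Import structures.
From mathcomp Require Import all_boot all_order all_algebra.
From mathcomp Require Import complex ring zify.
Import Order.TTheory GRing.Theory Num.Theory.
Set Implicit Arguments. Unset Strict Implicit. Unset Printing Implicit Defensive.
Local Open Scope ring_scope.

(* The Gram matrix G = Psi^* Psi of a Parseval frame is an orthogonal
   projection of trace N: its diagonal d_i = |psi_i|^2 sums to N, and so do
   the squared moduli of all its entries.  Hence the off-diagonal moduli have
   squared sum N - sum_i d_i^2.  Applying Cauchy-Schwarz to the off-diagonal
   moduli and to the d_i gives the exact identity
     M TC^2 = n (M N - N^2) - defect,   n = M (M - 1) off-diagonal pairs,
   where the defect is a nonnegative combination of the two Cauchy-Schwarz
   gaps, vanishing exactly for equiangular frames. *)

Section CauchySchwarzGap.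
Variables (R : numDomainType) (I : finType) (A : {pred I}) (a : I -> R).

Definition cs_gap : R :=
  #|A|%:R * \sum_(x in A) a x ^+ 2 - (\sum_(x in A) a x) ^+ 2.

Lemma cs_gap_sum_sqr_diff :
  cs_gap *+ 2 = \sum_(x in A) \sum_(y in A) (a x - a y) ^+ 2.
Proof.
rewrite /cs_gap; set s1 := \sum_(x in A) a x; set s2 := \sum_(x in A) a x ^+ 2.
have inner x : \sum_(y in A) (a x - a y) ^+ 2 = a x ^+ 2 *+ #|A| - (a x * s1) *+ 2 + s2.
  rewrite mulr_sumr -sumrMnl -sumr_const -sumrB -big_split.
  by apply: eq_bigr => y _; rewrite sqrrB.
rewrite (eq_bigr _ (fun x _ => inner x)).
rewrite big_split /= sumrB sumr_const !sumrMnl -mulr_suml -/s1 -/s2.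
clearbody s1 s2; ring.
Qed.

Hypothesis a_real : {in A, forall x, a x \is Num.real}.

Let sqr_diff_ge0 x y : x \in A -> y \in A -> 0 <= (a x - a y) ^+ 2.
Proof. by move=> Ax Ay; rewrite -realEsqr realB ?a_real. Qed.

Lemma cs_gap_ge0 : 0 <= cs_gap.
Proof.
rewrite -(pmulrn_lge0 _ (isT : 0 < 2)%N) cs_gap_sum_sqr_diff.
by apply: sumr_ge0 => x Ax; apply: sumr_ge0 => y Ay; exact: sqr_diff_ge0.
Qed.

Lemma cs_gap_eq0 : cs_gap = 0 <-> {in A &, forall x y, a x = a y}.
Proof.
split=> [gap0 x y Ax Ay | a_const].
  have sum0 : \sum_(x in A) \sum_(y in A) (a x - a y) ^+ 2 = 0.
    by rewrite -cs_gap_sum_sqr_diff gap0 mul0rn.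
  have row0 : \sum_(y in A) (a x - a y) ^+ 2 = 0.
    apply: (psumr_eq0P _ sum0) => // z Az.
    by apply: sumr_ge0 => w Aw; exact: sqr_diff_ge0.
  have /eqP : (a x - a y) ^+ 2 = 0.
    by apply: (psumr_eq0P _ row0) => // z Az; exact: sqr_diff_ge0.
  by rewrite sqrf_eq0 subr_eq0 => /eqP.
have /eqP : cs_gap *+ 2 = 0.
  rewrite cs_gap_sum_sqr_diff big1 // => x Ax.
  by rewrite big1 // => y Ay; rewrite (a_const x y) ?subrr ?expr0n.
by rewrite mulrn_eq0 => /eqP.
Qed.

End CauchySchwarzGap.

Section ParsevalGram.
Variables (R : rcfType) (N M : nat) (Psi : 'M[R[i]]_(N, M)).

Lemma ip_gram i j : ip Psi i j = (adjmx Psi *m Psi) j i.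
Proof. by rewrite mxE; apply: eq_bigr => k _; rewrite !mxE mulrC. Qed.

Lemma ip_conj i j : ip Psi j i = (ip Psi i j)^*.
Proof.
by rewrite /ip rmorph_sum; apply: eq_bigr => k _; rewrite rmorphM /= conjCK mulrC.
Qed.

Lemma ip_diag_ge0 i : 0 <= ip Psi i i.
Proof. by apply: sumr_ge0 => k _; rewrite -normCK exprn_ge0. Qed.

Lemma vnormE i : vnorm Psi i = sqrtC (ip Psi i i).
Proof. by congr sqrtC; apply: eq_bigr => k _; rewrite normCK. Qed.

Hypothesis Psi_tight : Psi *m adjmx Psi = 1%:M.

Lemma sum_ip_diag : \sum_i ip Psi i i = N%:R.
Proof.
under eq_bigr do rewrite ip_gram.
by rewrite -/(\tr _) mxtrace_mulC Psi_tight mxtrace_scalar.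
Qed.

Lemma sum_sqr_norm_ip : \sum_i \sum_j `|ip Psi i j| ^+ 2 = N%:R.
Proof.
have gram_idem : (adjmx Psi *m Psi) *m (adjmx Psi *m Psi) = adjmx Psi *m Psi.
  by rewrite mulmxA -(mulmxA (adjmx Psi)) Psi_tight mulmx1.
rewrite -sum_ip_diag; apply: eq_bigr => i _.
rewrite [in RHS]ip_gram -gram_idem mxE; apply: eq_bigr => j _.
by rewrite normCK -ip_conj !ip_gram mulrC.
Qed.

End ParsevalGram.

Section TotalCoherence.
Variables (R : rcfType) (N M : nat).
Implicit Types Phi Psi : 'M[R[i]]_(N, M).

Definition offdiag : {pred 'I_M * 'I_M} := [pred p | p.1 != p.2].

Definition coherence_gap Psi := cs_gap offdiag (fun p => `|ip Psi p.1 p.2|).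

Definition norm_gap Psi := cs_gap 'I_M (fun i => ip Psi i i).

Definition TC_defect Psi :=
  #|offdiag|%:R * norm_gap Psi + M%:R * coherence_gap Psi.

Lemma coherence_gap_eq0 Psi :
  coherence_gap Psi = 0 <->
  {in offdiag &, forall p q, `|ip Psi p.1 p.2| = `|ip Psi q.1 q.2|}.
Proof. by apply: cs_gap_eq0 => p _; apply: normr_real. Qed.

Lemma norm_gap_eq0 Psi : norm_gap Psi = 0 <-> forall i j, ip Psi i i = ip Psi j j.
Proof.
rewrite cs_gap_eq0; last by move=> i _; rewrite ger0_real ?ip_diag_ge0.
by split=> [eq_d i j | eq_d i j _ _]; apply: eq_d.
Qed.

Lemma coherence_gap_ge0 Psi : 0 <= coherence_gap Psi.
Proof. by apply: cs_gap_ge0 => p _; apply: normr_real. Qed.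

Lemma norm_gap_ge0 Psi : 0 <= norm_gap Psi.
Proof. by apply: cs_gap_ge0 => i _; rewrite ger0_real ?ip_diag_ge0. Qed.

Lemma TC_defect_ge0 Psi : 0 <= TC_defect Psi.
Proof. by rewrite addr_ge0 ?mulr_ge0 ?coherence_gap_ge0 ?norm_gap_ge0. Qed.

Lemma equiangularE Psi :
  equiangular Psi <-> coherence_gap Psi = 0 /\ norm_gap Psi = 0.
Proof.
split=> [[eq_norm [c eq_c]] | [/coherence_gap_eq0 eq_coh /norm_gap_eq0 eq_d]].
  split; [apply/coherence_gap_eq0 => p q p_off q_off | apply/norm_gap_eq0 => i j].
    by rewrite !eq_c.
  by rewrite -[ip Psi i i]sqrtCK -[ip Psi j j]sqrtCK -!vnormE (eq_norm i j).
split=> [i j | ]; first by rewrite !vnormE (eq_d i j).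
case: (pickP offdiag) => [p0 p0_off | no_off].
  by exists `|ip Psi p0.1 p0.2| => i j ij; exact: (eq_coh (i, j) p0).
by exists 0 => i j ij; have := no_off (i, j); rewrite /offdiag /= ij.
Qed.

Lemma TC_defect_eq0 Psi : TC_defect Psi = 0 <-> equiangular Psi.
Proof.
split=> [defect0 | /equiangularE[coh0 norm0]]; last first.
  by rewrite /TC_defect coh0 norm0 !mulr0 addr0.
apply/equiangularE.
have [M_le1 | M_gt1] := leqP M 1.
  (* the weight [#|offdiag|] vanishes, but every frame is equiangular *)
  have ord_eq (i j : 'I_M) : i = j.
    by apply: ord_inj; move: (ltn_ord i) (ltn_ord j); lia.
  split; [apply/coherence_gap_eq0 => p q | apply/norm_gap_eq0 => i j].
    by rewrite (ord_eq p.1 q.1) (ord_eq p.2 q.2).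
  by rewrite (ord_eq i j).
have off_pos : 0 < #|offdiag|%:R :> R[i].
  rewrite ltr0n; apply/card_gt0P.
  by exists (Ordinal (ltnW M_gt1), Ordinal M_gt1).
have M_pos : 0 < M%:R :> R[i] by rewrite ltr0n ltnW.
move/eqP: defect0.
rewrite paddr_eq0 ?mulr_ge0 ?ler0n ?coherence_gap_ge0 ?norm_gap_ge0 //.
by rewrite !mulf_eq0 (gt_eqF off_pos) (gt_eqF M_pos) => /andP[/eqP-> /eqP->].
Qed.

Lemma TC_ge0 Psi : 0 <= TC Psi.
Proof. by apply: sumr_ge0 => i _; apply: sumr_ge0. Qed.

Lemma sum_offdiag (F : 'I_M -> 'I_M -> R[i]) :
  \sum_(p in offdiag) F p.1 p.2 = \sum_i \sum_(j | j != i) F i j.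
Proof. by rewrite pair_big_dep; apply: eq_bigl => p; rewrite eq_sym. Qed.

Section Tight.
Variables (Psi : 'M[R[i]]_(N, M)) (Psi_tight : Psi *m adjmx Psi = 1%:M).

Lemma sum_sqr_offdiag :
  \sum_(p in offdiag) `|ip Psi p.1 p.2| ^+ 2 = N%:R - \sum_i ip Psi i i ^+ 2.
Proof.
rewrite (sum_offdiag (fun i j => `|ip Psi i j| ^+ 2)).
rewrite -(sum_sqr_norm_ip Psi_tight) -sumrB; apply: eq_bigr => i _.
by rewrite [in RHS](bigD1 i) //= ger0_norm ?ip_diag_ge0 // addrAC subrr add0r.
Qed.

Lemma TC_sqr_tight :
  M%:R * TC Psi ^+ 2 =
  #|offdiag|%:R * (M%:R * N%:R - N%:R ^+ 2) - TC_defect Psi.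
Proof.
rewrite /TC_defect /coherence_gap /norm_gap /cs_gap.
rewrite /TC -(sum_offdiag (fun i j => `|ip Psi i j|)) sum_sqr_offdiag.
rewrite card_ord (sum_ip_diag Psi_tight).
set d2 := \sum_i ip Psi i i ^+ 2; set tc := \sum_(p in offdiag) _.
by clearbody d2 tc; ring.
Qed.

Lemma TCfull_tight : TCfull Psi = TC Psi + N%:R.
Proof.
rewrite /TCfull /TC -(sum_ip_diag Psi_tight) -big_split; apply: eq_bigr => i _.
by rewrite (bigD1 i) //= ger0_norm ?ip_diag_ge0 // addrC.
Qed.

End Tight.

Section EquiangularComparison.
Variables Phi Psi : 'M[R[i]]_(N, M).
Hypotheses (Phi_tight : Phi *m adjmx Phi = 1%:M) (Phi_equi : equiangular Phi).
Hypothesis Psi_tight : Psi *m adjmx Psi = 1%:M.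

Lemma TC_sqr_equiangular :
  M%:R * TC Psi ^+ 2 + TC_defect Psi = M%:R * TC Phi ^+ 2.
Proof.
rewrite (TC_sqr_tight Psi_tight) (TC_sqr_tight Phi_tight).
by rewrite (proj2 (TC_defect_eq0 Phi) Phi_equi) subr0 subrK.
Qed.

Lemma TC_le_equiangular : TC Psi <= TC Phi.
Proof.
have [M0 | M_gt0] := posnP M.
  by rewrite /TC !big1 // => i; move: (ltn_ord i); lia.
have M_pos : 0 < M%:R :> R[i] by rewrite ltr0n.
rewrite -(ler_pXn2r (isT : 0 < 2)%N) ?nnegrE ?TC_ge0 // -(ler_pM2l M_pos).
by rewrite -TC_sqr_equiangular lerDl TC_defect_ge0.
Qed.

Lemma equiangular_of_TC_ge : TC Phi <= TC Psi -> equiangular Psi.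
Proof.
move=> le_TC; apply/TC_defect_eq0/le_anti; rewrite TC_defect_ge0 andbT.
rewrite -(lerD2l (M%:R * TC Psi ^+ 2)) addr0 TC_sqr_equiangular.
by rewrite ler_wpM2l ?ler0n // lerXn2r ?nnegrE ?TC_ge0.
Qed.

End EquiangularComparison.

End TotalCoherence.

Theorem theorem2 (R : rcfType) (K : scalar_field) (N M : nat) :
  (forall Phi Psi : 'M[R[i]]_(N, M),
      parseval K Phi -> equiangular Phi -> parseval K Psi ->
      TC Psi <= TC Phi)
  /\
  ((exists Phi0 : 'M[R[i]]_(N, M), parseval K Phi0 /\ equiangular Phi0) ->
   forall Psi : 'M[R[i]]_(N, M), parseval K Psi ->
     ((forall Psi' : 'M[R[i]]_(N, M), parseval K Psi' -> TC Psi' <= TC Psi)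
        <-> equiangular Psi)
     /\
     ((forall Psi' : 'M[R[i]]_(N, M), parseval K Psi' -> TCfull Psi' <= TCfull Psi)
        <-> equiangular Psi)).
Proof.
split=> [Phi Psi [_ Phi_tight] Phi_equi [_ Psi_tight] | ].
  exact: TC_le_equiangular Phi_tight Phi_equi Psi_tight.
move=> [Phi0 [[K0 Phi0_tight] Phi0_equi]] Psi [_ Psi_tight].
have TC_max : (forall Psi' : 'M_(N, M), parseval K Psi' -> TC Psi' <= TC Psi)
               <-> equiangular Psi.
  split=> [Psi_max | Psi_equi Psi' [_ Psi'_tight]].
    apply: (equiangular_of_TC_ge Phi0_tight Phi0_equi Psi_tight).
    exact: Psi_max (conj K0 Phi0_tight).
  exact: TC_le_equiangular Psi_tight Psi_equi Psi'_tight.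
split=> //; apply: iff_trans TC_max.
split=> Psi_max Psi' Psi'_frame; have := Psi_max Psi' Psi'_frame;
  by case: Psi'_frame => _ Psi'_tight; rewrite !TCfull_tight // lerD2r.
Qed.
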